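(* Let $F$ be a field of characteristic $\neq 2$ and let $(V,q)$ be the orthogonal direct sum of nondegenerate quadratic spaces $(V_1,q_1)$ and $(V_2,q_2)$, so that $C(V_i,q_i)\subseteq C(V,q)$. Let $t_i\in\Gamma^+(V_i,q_i)$ and suppose there exist $s_i\in\Gamma(V_i,q_i)$ with $s_it_is_i^{-1}=N(t_i)t_i^{-1}$ for $i=1,2$. Let $t=t_1t_2\in\Gamma^+(V,q)$ and $s=s_1s_2$. Then $sts^{-1}=N(t)t^{-1}$.
   Context: $C(V,q)=T(V)/\langle x\otimes x-q(x)\cdot1\rangle=C_0\oplus C_1$ is the Clifford algebra, $\Gamma(V,q)=\{u\in C(V,q)^\times: uVu^{-1}\subseteq V\}$ the Clifford group and $\Gamma^+(V,q)=\Gamma(V,q)\cap C_0(V,q)$. With $\tau$ the anti-involution reversing products of vectors, $N(u)=\tau(u)u\in F^*$ is the norm. *)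

(* Clifford algebras are not in the library; we characterise
   C(V,q) by its universal property (which determines it up to unique iso). *)
From HB Require Import structures.
From mathcomp Require Import all_boot all_order all_algebra.
Set Implicit Arguments. Unset Strict Implicit. Unset Printing Implicit Defensive.
Import Order.TTheory GRing.Theory.
Local Open Scope ring_scope.

Section Clifford.
Variables (F : fieldType) (V : vectType F).

Definition polar (q : V -> F) (x y : V) : F := q (x + y) - q x - q y.

Definition quad_form (q : V -> F) : Prop :=
  (forall (a : F) (x : V), q (a *: x) = a ^+ 2 * q x) /\
  (forall (a : F) (x y z : V), polar q (a *: x + y) z = a * polar q x z + polar q y z).

Definition nondeg_on (q : V -> F) (W : {vspace V}) : Prop :=
  forall x, x \in W -> (forall y, y \in W -> polar q x y = 0) -> x = 0.

Definition orth_direct_sum (q : V -> F) (W1 W2 : {vspace V}) : Prop :=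
  (W1 + W2 = fullv)%VS /\ (W1 :&: W2 = 0)%VS /\
  (forall x y, x \in W1 -> y \in W2 -> polar q x y = 0).

Definition is_clifford (q : V -> F) (A : algType F) (iota : {linear V -> A}) : Prop :=
  (forall x, iota x * iota x = (q x)%:A) /\
  forall (B : algType F) (f : {linear V -> B}),
    (forall x, f x * f x = (q x)%:A) ->
    exists g : {lrmorphism A -> B},
      (forall x, g (iota x) = f x) /\
      (forall h : {lrmorphism A -> B}, (forall x, h (iota x) = f x) -> h =1 g).

Definition is_reversal (A : algType F) (iota : {linear V -> A}) (tau : A -> A) : Prop :=
  [/\ linear tau, tau 1 = 1,
      (forall u v, tau (u * v) = tau v * tau u),
      (forall x, tau (iota x) = iota x) & (forall u, tau (tau u) = u)].

Section Sub.
Variables (A : algType F) (iota : {linear V -> A}) (W : {vspace V}).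

(* C(W, q|_W), viewed inside C(V,q): the subalgebra generated by iota(W) *)
Inductive cl_sub : A -> Prop :=
| cs1 : cl_sub 1
| csV w : w \in W -> cl_sub (iota w)
| csD u v : cl_sub u -> cl_sub v -> cl_sub (u + v)
| csZ (a : F) u : cl_sub u -> cl_sub (a *: u)
| csM u v : cl_sub u -> cl_sub v -> cl_sub (u * v).

(* C_0(W, q|_W): span of products of an even number of vectors of W *)
Inductive cl_even : A -> Prop :=
| ce1 : cl_even 1
| ce2 w1 w2 : w1 \in W -> w2 \in W -> cl_even (iota w1 * iota w2)
| ceD u v : cl_even u -> cl_even v -> cl_even (u + v)
| ceZ (a : F) u : cl_even u -> cl_even (a *: u)
| ceM u v : cl_even u -> cl_even v -> cl_even (u * v).
End Sub.

Section Group.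
Variables (A : unitAlgType F) (iota : {linear V -> A}) (W : {vspace V}).

Definition clifford_group (u : A) : Prop :=
  [/\ cl_sub iota W u, u \is a GRing.unit, cl_sub iota W u^-1 &
      forall x, x \in W -> exists2 y, y \in W & u * iota x * u^-1 = iota y].

Definition clifford_group_plus (u : A) : Prop :=
  clifford_group u /\ cl_even iota W u.
End Group.

Definition cl_norm (A : algType F) (tau : A -> A) (u : A) : A := tau u * u.

End Clifford.

From HB Require Import structures.
From mathcomp Require Import all_boot all_order all_algebra.
Import GRing.Theory.
Set Implicit Arguments. Unset Strict Implicit.
Local Open Scope ring_scope.

(* Vectors of orthogonal subspaces anticommute in C(V,q), so a vector of V1
   commutes with every even product of vectors of V2; hence C(V1) and C_0(V2)
   commute elementwise.  Since N(t_i) t_i^-1 = tau(t_i), conjugating t_1 t_2 by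
   s_1 s_2 lets each s_i act on its own factor only, giving
   tau(t_1) tau(t_2) = tau(t_2) tau(t_1) = tau(t_1 t_2) = N(t) t^-1. *)

Section CliffordCommutation.
Variables (F : fieldType) (V : vectType F) (q : V -> F).
Variables (A : algType F) (iota : {linear V -> A}).
Hypothesis iota_sq : forall x, iota x * iota x = (q x)%:A.

Lemma polarC x y : polar q x y = polar q y x.
Proof. by rewrite /polar [x + y]addrC addrAC. Qed.

Lemma iota_anticomm_polar x y :
  iota x * iota y + iota y * iota x = (polar q x y)%:A.
Proof.
have := iota_sq (x + y); rewrite raddfD mulrDl !mulrDr !iota_sq /polar !scalerBl.
move=> <-; set a := (q x)%:A; set d := (q y)%:A.
by rewrite -addrA -opprD [a + _]addrC addrACA addrK.
Qed.

Lemma iota_anticomm x y :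
  polar q x y = 0 -> iota x * iota y = - (iota y * iota x).
Proof.
by move=> xy0; apply/eqP; rewrite -subr_eq0 opprK iota_anticomm_polar xy0 scale0r.
Qed.

Variables W1 W2 : {vspace V}.
Hypothesis orthW : forall x y, x \in W1 -> y \in W2 -> polar q x y = 0.

Lemma comm_iota_even x e :
  x \in W1 -> cl_even iota W2 e -> GRing.comm (iota x) e.
Proof.
move=> W1x; elim=> [|y z W2y W2z|u v _ xu _ xv|a u _ xu|u v _ xu _ xv].
- exact: commr1.
- rewrite /GRing.comm mulrA (iota_anticomm (orthW W1x W2y)) mulNr -!mulrA.
  by rewrite (iota_anticomm (orthW W1x W2z)) mulrN opprK.
- exact: commrD.
- by rewrite /GRing.comm -scalerAr -scalerAl xu.
- exact: commrM.
Qed.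

Lemma comm_sub_even u e :
  cl_sub iota W1 u -> cl_even iota W2 e -> GRing.comm u e.
Proof.
move=> W1u W2e; apply: commr_sym.
elim: W1u => [|x W1x|v w _ ev _ ew|a v _ ev|v w _ ev _ ew].
- exact: commr1.
- exact/commr_sym/comm_iota_even.
- exact: commrD.
- by rewrite /GRing.comm -scalerAr -scalerAl ev.
- exact: commrM.
Qed.

End CliffordCommutation.

Lemma cl_even_sub (F : fieldType) (V : vectType F) (A : algType F)
  (iota : {linear V -> A}) (W : {vspace V}) e :
  cl_even iota W e -> cl_sub iota W e.
Proof.
elim=> [|x y Wx Wy|u v _ Wu _ Wv|a u _ Wu|u v _ Wu _ Wv].
- exact: cs1.
- by apply: csM; apply: csV.
- exact: csD.
- exact: csZ.
- exact: csM.
Qed.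

Lemma reversal_even (F : fieldType) (V : vectType F) (A : algType F)
  (iota : {linear V -> A}) (W : {vspace V}) tau e :
  is_reversal iota tau -> cl_even iota W e -> cl_even iota W (tau e).
Proof.
case=> /GRing.semilinear_linear[tauZ tauD] tau1 tauM tau_iota _.
elim=> [|x y Wx Wy|u v _ Wu _ Wv|a u _ Wu|u v _ Wu _ Wv].
- by rewrite tau1; apply: ce1.
- by rewrite tauM !tau_iota; apply: ce2.
- by rewrite tauD; apply: ceD.
- by rewrite tauZ; apply: ceZ.
- by rewrite tauM; apply: ceM.
Qed.

Theorem lemma5p2 (F : fieldType) (V : vectType F) (q : V -> F)
  (V1 V2 : {vspace V}) (A : unitAlgType F) (iota : {linear V -> A})
  (tau : A -> A) (t1 t2 s1 s2 : A) :
  (2%:R : F) != 0 ->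
  quad_form q ->
  orth_direct_sum q V1 V2 ->
  nondeg_on q V1 -> nondeg_on q V2 ->
  is_clifford q iota ->
  is_reversal iota tau ->
  clifford_group_plus iota V1 t1 -> clifford_group_plus iota V2 t2 ->
  clifford_group iota V1 s1 -> clifford_group iota V2 s2 ->
  s1 * t1 * s1^-1 = cl_norm tau t1 * t1^-1 ->
  s2 * t2 * s2^-1 = cl_norm tau t2 * t2^-1 ->
  (s1 * s2) * (t1 * t2) * (s1 * s2)^-1 = cl_norm tau (t1 * t2) * (t1 * t2)^-1.
Proof.
move=> _ _ [_ [_ orth12]] _ _ [iota_sq _] rev [[t1V1 t1U _ _] t1E] [[_ t2U _ _] t2E]
  [_ s1U s1iV1 _] [s2V2 s2U _ _].
have orth21 x y : x \in V2 -> y \in V1 -> polar q x y = 0.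
  by move=> V2x V1y; rewrite polarC orth12.
have comm12 := comm_sub_even iota_sq orth12.
have comm21 := comm_sub_even iota_sq orth21.
have t12U : t1 * t2 \is a GRing.unit.
  by rewrite unitrM_comm ?t1U ?t2U //; apply: comm12 t1V1 t2E.
rewrite /cl_norm !mulrK // => conj_t1 conj_t2.
have [_ _ tauM _ _] := rev.
have s2_t1 : GRing.comm s2 t1 := comm21 _ _ s2V2 t1E.
have s1i_tau_t2 : GRing.comm s1^-1 (tau t2) :=
  comm12 _ _ s1iV1 (reversal_even rev t2E).
have tau_t1_t2 : GRing.comm (tau t1) (tau t2) :=
  comm12 _ _ (cl_even_sub (reversal_even rev t1E)) (reversal_even rev t2E).
rewrite invrM // tauM -!mulrA (mulrA s2 t1) s2_t1 -mulrA.
rewrite (mulrA s2) (mulrA (s2 * t2)) conj_t2.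
by rewrite -s1i_tau_t2 !mulrA conj_t1 tau_t1_t2.
Qed.
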